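(* Let $d\ge1$ and let $\|\cdot\|$ be a norm on $\mathbb{R}^d$. Let $A\in\mathcal{B}(\mathbb{R}^d)$ and $a_1\in A$, with $A$ star-shaped relative to $a_1$ and $$\mathfrak{p}(A,\|\cdot-a_1\|):=\inf\Big\{\frac{\lambda_d(B(x,t)\cap A)}{\lambda_d(B(x,t))}:\ x\in A,\ 0<t\le\|x-a_1\|\Big\}>0.$$ Let $\nu=f\cdot\lambda_d$ be a probability measure on $\mathbb{R}^d$ where $f$ is almost radial non-increasing on $A$ with respect to $a_1$, with associated norm $\|\cdot\|_0$ and constant $M\in(0,1]$, and let $C_0\in[1,+\infty)$ satisfy $\frac1{C_0}\|x\|_0\le\|x\|\le C_0\|x\|_0$ for every $x\in\mathbb{R}^d$. Then for every $x\in A$ and every $t\in(0,\|x-a_1\|]$, $$\nu(B(x,t))\ge M\,\mathfrak{p}(A,\|\cdot-a_1\|)\,(2C_0^2)^{-d}\,V_d\,f(x)\,t^d.$$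
   Context: $B(x,t)=\{y:\|y-x\|\le t\}$, $\lambda_d$ Lebesgue measure, $V_d=\lambda_d(B(0,1))$. A function $f:\mathbb{R}^d\to\mathbb{R}_+$ is almost radial non-increasing on $A$ with respect to $a\in A$ if there exist a norm $\|\cdot\|_0$ on $\mathbb{R}^d$ and a constant $M\in(0,1]$ such that for all $x,y\in A\setminus\{a\}$ with $\|y-a\|_0\le\|x-a\|_0$, one has $f(y)\ge Mf(x)$. *)

From HB Require Import structures.
From mathcomp Require Import all_boot all_order all_algebra.
From mathcomp Require Import all_classical all_reals all_analysis.
Set Implicit Arguments. Unset Strict Implicit. Unset Printing Implicit Defensive.
Import Order.TTheory GRing.Theory Num.Theory.
Local Open Scope classical_set_scope.
Local Open Scope ring_scope.

(* R^d is modelled as d.-tuple R, carrying the product (= Borel) sigma-algebra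
   provided by MathComp-Analysis.  Vector operations are coordinatewise. *)
Section Rd.
Variables (R : realType) (d : nat).
Definition vadd (x y : d.-tuple R) : d.-tuple R := [tuple tnth x i + tnth y i | i < d].
Definition vsub (x y : d.-tuple R) : d.-tuple R := [tuple tnth x i - tnth y i | i < d].
Definition vscale (k : R) (x : d.-tuple R) : d.-tuple R := [tuple k * tnth x i | i < d].
Definition vzero : d.-tuple R := [tuple (0 : R) | i < d].

Definition is_norm (N : d.-tuple R -> R) : Prop :=
  [/\ forall x, N x = 0 -> x = vzero,
      forall k x, N (vscale k x) = `|k| * N x
    & forall x y, N (vadd x y) <= N x + N y].

Definition nball (N : d.-tuple R -> R) (x : d.-tuple R) (t : R) : set (d.-tuple R) :=
  [set y | N (vsub y x) <= t].

(* lam is the d-dimensional Lebesgue measure: it gives every closed box its volume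
   (this characterizes Lebesgue measure on the Borel sets of R^d uniquely). *)
Definition is_lebesgue_d (lam : set (d.-tuple R) -> \bar R) : Prop :=
  forall a b : d.-tuple R, (forall i, tnth a i <= tnth b i) ->
    lam [set x | forall i, tnth a i <= tnth x i <= tnth b i]
    = (\prod_(i < d) (tnth b i - tnth a i))%:E.

Definition star_shaped (A : set (d.-tuple R)) (a : d.-tuple R) : Prop :=
  forall x, A x -> forall s : R, 0 <= s <= 1 -> A (vadd a (vscale s (vsub x a))).

(* p(A, ||. - a||) as an extended real (inf of the empty set is +oo) *)
Definition pA (lam : set (d.-tuple R) -> \bar R) (N : d.-tuple R -> R)
    (A : set (d.-tuple R)) (a : d.-tuple R) : \bar R :=
  ereal_inf [set r : \bar R | exists x t, [/\ A x, 0 < t <= N (vsub x a) &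
     r = (fine (lam (nball N x t `&` A)) / fine (lam (nball N x t)))%:E]].

Definition almost_radial_nonincr_with (f : d.-tuple R -> R) (A : set (d.-tuple R))
    (a : d.-tuple R) (N0 : d.-tuple R -> R) (M : R) : Prop :=
  [/\ is_norm N0, 0 < M <= 1 &
      forall x y, A x -> x <> a -> A y -> y <> a ->
        N0 (vsub y a) <= N0 (vsub x a) -> f y >= M * f x].
End Rd.

From HB Require Import structures.
From mathcomp Require Import all_boot all_order all_algebra.
From mathcomp Require Import all_classical all_reals all_analysis.
From mathcomp Require Import ring lra measurable_realfun.
Import Order.TTheory GRing.Theory Num.Theory.
Local Open Scope classical_set_scope.
Local Open Scope ring_scope.
Set Implicit Arguments. Unset Strict Implicit. Unset Printing Implicit Defensive.

(* Slide [x] towards [a1]: x' = a1 + (1 - t / (2 |x - a1|)) (x - a1) lies in [A] by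
   star-shapedness, and the ball B' = B(x', t / (2 C0^2)) sits inside B(x, t) while each of
   its points is, for the norm [N0], no farther from [a1] than [x].  So [f >= M f(x)] on
   [B' /\ A] (minus the null set {a1}), whence
     nu(B(x, t)) >= M f(x) lam(B' /\ A) >= M f(x) p lam(B') = M f(x) p (t / (2 C0^2))^d V_d.
   The scaling law for [lam] on norm balls follows from uniqueness of measures that agree
   on boxes; balls are in the sigma-algebra generated by boxes because [N] is Lipschitz
   for the sup-norm, so its sublevel sets are countable intersections of unions of grid
   cells. *)

(* [fine +oo = 0], so for [l = +oo] the last hypothesis contradicts [0 < p]. *)
Lemma mule_le_of_le_fine_div (R : realFieldType) (p q l : \bar R) :
  (0 < p)%E -> (0 <= q)%E -> (q <= l)%E -> (p <= (fine q / fine l)%:E)%E -> (p * l <= q)%E.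
Proof.
move=> p_gt0; case: l => [l| |]; case: q => [q| |] //=; rewrite ?lee_fin => q_ge0 ql.
- have [->|l_neq0] := eqVneq l 0; first by rewrite mule0.
  move=> p_le; apply: (le_trans (lee_wpmul2r _ p_le)); first by rewrite lee_fin (le_trans q_ge0).
  by rewrite -EFinM divfK.
- by rewrite invr0 mulr0 => /(lt_le_trans p_gt0); rewrite ltxx.
- by rewrite invr0 mulr0 => /(lt_le_trans p_gt0); rewrite ltxx.
Qed.

Lemma measureD_null d (T : measurableType d) (R : realFieldType)
    (mu : {measure set T -> \bar R}) (A B : set T) :
  measurable A -> measurable B -> mu B = 0%E -> mu (A `\` B) = mu A.
Proof.
move=> mA mB B0; rewrite (measureDI mu mA mB) (@subset_measure0 _ _ _ mu (A `&` B) B) ?adde0 //.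
exact: measurableI.
Qed.

Lemma cst_mul_measure_le_integral d (T : measurableType d) (R : realType)
    (mu : {measure set T -> \bar R}) (D E : set T) (f : T -> R) (c : R) :
  measurable D -> measurable E -> E `<=` D -> measurable_fun D f ->
  (forall y, D y -> 0 <= f y) -> 0 <= c -> (forall y, E y -> c <= f y) ->
  (c%:E * mu E <= \int[mu]_(y in D) (f y)%:E)%E.
Proof.
move=> mD mE ED mf f_ge0 c_ge0 c_le_f.
rewrite -(integral_cst mu mE) (@le_trans _ _ (\int[mu]_(y in E) (f y)%:E)%E) //.
  by apply: ge0_le_integral => //; apply/measurable_EFinP; exact: measurable_funS mf.
by apply: ge0_subset_integral => //; exact/measurable_EFinP.
Qed.

Section Vectors.
Variables (R : realType) (d : nat).
Implicit Types (x y : d.-tuple R) (k : R).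

Lemma tnth_vadd x y i : tnth (vadd x y) i = tnth x i + tnth y i.
Proof. exact: tnth_mktuple. Qed.

Lemma tnth_vsub x y i : tnth (vsub x y) i = tnth x i - tnth y i.
Proof. exact: tnth_mktuple. Qed.

Lemma tnth_vscale k x i : tnth (vscale k x) i = k * tnth x i.
Proof. exact: tnth_mktuple. Qed.

Lemma tnth_vzero i : tnth (vzero R d) i = 0.
Proof. exact: tnth_mktuple. Qed.

End Vectors.

Definition vectE := (tnth_vadd, tnth_vsub, tnth_vscale, tnth_vzero).

Section Norm.
Variables (R : realType) (d : nat) (N : d.-tuple R -> R).
Hypothesis hN : is_norm N.
Implicit Types (x y z v : d.-tuple R).

Lemma vnormZ (k : R) x : N (vscale k x) = `|k| * N x.
Proof. by case: hN. Qed.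

Lemma vnormD x y : N (vadd x y) <= N x + N y.
Proof. by case: hN. Qed.

Lemma vnorm0 : N (vzero R d) = 0.
Proof.
have -> : vzero R d = vscale 0 (vzero R d) by apply: eq_from_tnth => i; rewrite !vectE mul0r.
by rewrite vnormZ normr0 mul0r.
Qed.

Lemma vnorm_ge0 x : 0 <= N x.
Proof.
have := vnormD x (vscale (-1) x); rewrite vnormZ normrN1 mul1r.
have -> : vadd x (vscale (-1) x) = vzero R d by apply: eq_from_tnth => i; rewrite !vectE; ring.
by rewrite vnorm0 -mulr2n pmulrn_lge0.
Qed.

Lemma vnorm_subxx x : N (vsub x x) = 0.
Proof.
have -> : vsub x x = vzero R d by apply: eq_from_tnth => i; rewrite !vectE subrr.
exact: vnorm0.
Qed.

Lemma vnorm_sub_le x y z : N (vsub x z) <= N (vsub x y) + N (vsub y z).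
Proof.
have -> : vsub x z = vadd (vsub x y) (vsub y z).
  by apply: eq_from_tnth => i; rewrite !vectE; ring.
exact: vnormD.
Qed.

Definition basis_vec (k : nat) : d.-tuple R := [tuple ((val j == k)%:R : R) | j < d].

Definition basis_norm_sum : R := \sum_(0 <= k < d) N (basis_vec k).

Lemma basis_norm_sum_ge0 : 0 <= basis_norm_sum.
Proof. by apply: sumr_ge0 => k _; exact: vnorm_ge0. Qed.

(* Triangle inequality along [v = sum_i v_i e_i], adding one coordinate at a time. *)
Lemma vnorm_le_coord_bound v (del : R) :
  (forall i, `|tnth v i| <= del) -> N v <= del * basis_norm_sum.
Proof.
move=> hv; pose w k : d.-tuple R := [tuple if (val j < k)%N then tnth v j else 0 | j < d].
suff wk k : (k <= d)%N -> N (w k) <= del * \sum_(0 <= i < k) N (basis_vec i).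
  have -> : v = w d by apply: eq_from_tnth => j; rewrite tnth_mktuple ltn_ord.
  exact: wk.
elim: k => [_|k IH lt_kd].
  have -> : w 0%N = vzero R d by apply: eq_from_tnth => j; rewrite !tnth_mktuple.
  by rewrite vnorm0 big_geq // mulr0.
have -> : w k.+1 = vadd (w k) (vscale (tnth v (Ordinal lt_kd)) (basis_vec k)).
  apply: eq_from_tnth => j; rewrite !tnth_mktuple.
  case: (ltngtP j k) => [jk|kj|jk].
  - by rewrite ltnS (ltnW jk) mulr0 addr0.
  - by rewrite ltnS leqNgt kj mulr0 addr0.
  - by rewrite /= jk ltnSn mulr1 add0r; congr tnth; exact: val_inj.
rewrite big_nat_recr //= mulrDr; apply: (le_trans (vnormD _ _)).
apply: lerD; first exact: IH (ltnW lt_kd).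
by rewrite vnormZ ler_wpM2r ?vnorm_ge0.
Qed.

End Norm.

Section Boxes.
Variables (R : realType) (d : nat).
Implicit Types (a b y : d.-tuple R).

Definition box a b : set (d.-tuple R) := [set y | forall i, tnth a i <= tnth y i <= tnth b i].

Definition boxes : set (set (d.-tuple R)) := [set E | exists a b, E = box a b].

Lemma box_measurable a b : measurable (box a b).
Proof.
have -> : box a b = \bigcap_(i in [set: 'I_d]) (@tnth d R ^~ i @^-1` `[tnth a i, tnth b i]).
  apply/seteqP; split => y /= hy i; last by have := hy i I; rewrite /= in_itv.
  by move=> _; rewrite /= in_itv; exact: hy.
apply: fin_bigcap_measurable; first exact: finite_finset.
move=> i _; rewrite -[X in measurable X]setTI.
by apply: measurable_tnth => //; exact: measurable_itv.
Qed.

Lemma set1_box a : [set a] = box a a.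
Proof.
apply/seteqP; split => [_ -> i|y ya]; first by rewrite lexx.
by apply: eq_from_tnth => i; have /andP[ay ya'] := ya i; apply/le_anti; rewrite ay ya'.
Qed.

Lemma set1_measurable a : measurable [set a].
Proof. by rewrite set1_box; exact: box_measurable. Qed.

Lemma box_empty a b i : tnth b i < tnth a i -> box a b = set0.
Proof.
move=> ba; apply/seteqP; split => // y /(_ i) /andP[ay yb].
by have := le_lt_trans (le_trans ay yb) ba; rewrite ltxx.
Qed.

Definition cube (k : nat) : set (d.-tuple R) :=
  box [tuple - (k%:R : R) | i < d] [tuple (k%:R : R) | i < d].

Lemma cubes_cover : \bigcup_k cube k = setT.
Proof.
apply/seteqP; split => // y _.
have s0 : 0 <= \sum_(i < d) `|tnth y i| by exact: sumr_ge0.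
exists (Num.bound (\sum_(i < d) `|tnth y i|)) => // i.
rewrite !tnth_mktuple -ler_norml (le_trans _ (ltW (archi_boundP s0))) //.
by rewrite (bigD1 i) //= lerDl sumr_ge0.
Qed.

Lemma sigma_boxes_measurable : <<s boxes >> `<=` measurable.
Proof.
apply: smallest_sub; first exact: sigma_algebra_measurable.
by move=> _ [a [b ->]]; exact: box_measurable.
Qed.

Lemma boxes_setI_closed : setI_closed boxes.
Proof.
move=> _ _ [a [b ->]] [a' [b' ->]].
exists [tuple Num.max (tnth a i) (tnth a' i) | i < d].
exists [tuple Num.min (tnth b i) (tnth b' i) | i < d].
apply/seteqP; split => y /=.
  move=> [h h'] i; have /andP[? ?] := h i; have /andP[? ?] := h' i.
  by rewrite !tnth_mktuple ge_max le_min; apply/andP; split; apply/andP.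
move=> h; split => i; have := h i; rewrite !tnth_mktuple ge_max le_min.
  by case/andP => /andP[? ?] /andP[? ?]; apply/andP.
by case/andP => /andP[? ?] /andP[? ?]; apply/andP.
Qed.

(* [<<s boxes >>] as the measurable sets of a measurableType, so that the library's
   countable union and intersection lemmas apply to it. *)
Local Notation sigma_boxes :=
  (@g_sigma_algebraType ((d.-tuple R : measurableType _) : pointedType) boxes).

Definition mesh (n : nat) : R := n.+1%:R^-1.

Lemma mesh_gt0 n : 0 < mesh n.
Proof. by rewrite invr_gt0 ltr0Sn. Qed.

Lemma mesh_small (c e : R) : 0 <= c -> 0 < e -> exists n, c * mesh n <= e.
Proof.
move=> c0 e0; have ce0 : 0 <= c / e by exact: divr_ge0 (ltW e0).
exists (Num.bound (c / e)); rewrite ler_pdivrMr ?ltr0Sn // mulrC -ler_pdivrMr //.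
by rewrite (le_trans (ltW (archi_boundP ce0))) // ler_nat.
Qed.

Definition grid_point n (q : d.-tuple int) : d.-tuple R :=
  [tuple (tnth q i)%:~R * mesh n | i < d].

Definition grid_cell n (q : d.-tuple int) : set (d.-tuple R) :=
  box (grid_point n q) [tuple (tnth q i + 1)%:~R * mesh n | i < d].

Lemma grid_cell_near n q y : grid_cell n q y ->
  forall i, `|tnth y i - tnth (grid_point n q) i| <= mesh n.
Proof.
move=> hy i; have := hy i; rewrite !tnth_mktuple intrD mulrDl mul1r => /andP[h1 h2].
by rewrite ler_norml; apply/andP; split; lra.
Qed.

Lemma mem_grid_cell n y : grid_cell n [tuple Num.floor (tnth y i * n.+1%:R) | i < d] y.
Proof.
move=> i; rewrite !tnth_mktuple.
have yE : tnth y i = tnth y i * n.+1%:R * mesh n by rewrite mulrK // unitfE pnatr_eq0.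
rewrite [X in _ <= X <= _]yE !ler_wpM2r ?(ltW (mesh_gt0 n)) ?floor_le //.
by rewrite ltW // floorD1_gt.
Qed.

(* Cover [h <= s] by the cells of the grid of mesh [mesh n] whose corner satisfies
   [h <= s + K * mesh n]; the sublevel set is the intersection over [n] of these covers. *)
Lemma lipschitz_sublevel_sigma_boxes (h : d.-tuple R -> R) (K s : R) : 0 <= K ->
  (forall y z (e : R), (forall i, `|tnth y i - tnth z i| <= e) -> h y <= h z + K * e) ->
  <<s boxes >> [set y | h y <= s].
Proof.
move=> K0 hlip.
pose cover n := \bigcup_q
  if h (grid_point n q) <= s + K * mesh n then grid_cell n q else set0.
suff -> : [set y | h y <= s] = \bigcap_n cover n.
  apply: (@bigcapT_measurable _ sigma_boxes) => n.
  apply: (@countable_bigcupT_measurable _ sigma_boxes).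
    exact: countableP.
  move=> q; case: ifP => _; last exact: measurable0.
  by apply: sub_sigma_algebra; do 2 eexists.
apply/seteqP; split => y /=.
- move=> hy n _; exists [tuple Num.floor (tnth y i * n.+1%:R) | i < d] => //.
  rewrite ifT; first exact: mem_grid_cell.
  apply: (le_trans (hlip _ y (mesh n) _)); last by rewrite lerD2r.
  by move=> i; rewrite distrC; exact: grid_cell_near (mem_grid_cell n y) i.
- move=> hy; apply/ler_addgt0Pr => e e0.
  have [m hm] := mesh_small (mulr_ge0 (ler0n R 2) K0) e0.
  have [q _] := hy m I; case: ifP => // hq /grid_cell_near/hlip y_le; lra.
Qed.

End Boxes.

Arguments boxes {R d}.
Arguments cube {R d} k.

Section Rescale.
Variables (R : realType) (d : nat).
Variable lam : {measure set (d.-tuple R) -> \bar R}.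
Hypothesis hlam : is_lebesgue_d lam.
Variables (c : d.-tuple R) (s : R).
Hypothesis s_gt0 : 0 < s.
Implicit Types (a b y : d.-tuple R).

Definition rescale y : d.-tuple R := vscale s^-1 (vsub y c).

Lemma measurable_rescale : measurable_fun setT rescale.
Proof.
apply/measurable_fun_tnthP => i.
have -> : @tnth d R ^~ i \o rescale = fun y => s^-1 * (tnth y i - tnth c i).
  by apply: funext => y; rewrite /= !vectE.
apply: measurableT_comp => //; apply: measurable_funB => //; exact: measurable_tnth.
Qed.

Lemma preimage_rescale_box a b :
  rescale @^-1` box a b = box (vadd c (vscale s a)) (vadd c (vscale s b)).
Proof.
apply/seteqP; split => y hy i; have := hy i;
  by rewrite /rescale !vectE ler_pdivlMl // ler_pdivrMl // => /andP[? ?]; apply/andP; split; lra.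
Qed.

Lemma lebesgue_rescale_box a b :
  lam (rescale @^-1` box a b) = ((s ^+ d)%:E * lam (box a b))%E.
Proof.
rewrite preimage_rescale_box.
have [/forallP ab|/forallPn[i]] := boolP [forall i, tnth a i <= tnth b i]; last first.
  rewrite -ltNge => ba; rewrite (box_empty ba) (box_empty (i := i)) ?measure0 ?mule0 //.
  by rewrite !vectE ltrD2l ltr_pM2l.
have sab i : tnth (vadd c (vscale s a)) i <= tnth (vadd c (vscale s b)) i.
  by rewrite !vectE lerD2l ler_pM2l.
rewrite /box (hlam sab) (hlam ab) -EFinM; congr EFin.
have -> : s ^+ d = \prod_(i < d) s by rewrite prodr_const card_ord.
rewrite -big_split /=.
by apply: eq_bigr => i _; rewrite !vectE; ring.
Qed.

(* Both sides are measures agreeing on the intersection-stable family of boxes,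
   which covers the space by cubes of finite measure. *)
Lemma lebesgue_rescale E : <<s boxes >> E ->
  lam (rescale @^-1` E) = ((s ^+ d)%:E * lam E)%E.
Proof.
have sd_ge0 : 0 <= s ^+ d by rewrite exprn_ge0 // ltW.
move=> sE; symmetry.
apply: (@g_sigma_algebra_measure_unique _ R _ boxes _ cube _ (cubes_cover R d)
  (mscale (NngNum sd_ge0) lam) (pushforward lam rescale)).
- by move=> _ [a [b ->]]; exact: box_measurable.
- by move=> k; do 2 eexists.
- exact: measurable_rescale.
- exact: boxes_setI_closed.
- by move=> ? _ [a [b ->]]; exact/esym/lebesgue_rescale_box.
- move=> k; change ((s ^+ d)%:E * lam (cube k) < +oo)%E.
  rewrite /cube /box hlam ?ltry // => i.
  by rewrite !tnth_mktuple; have := ler0n R k; lra.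
- exact: sE.
Qed.

End Rescale.

Section NormBalls.
Variables (R : realType) (d : nat) (N : d.-tuple R -> R).
Hypothesis hN : is_norm N.

Lemma nball_sigma_boxes c s : <<s boxes >> (nball N c s).
Proof.
apply: (lipschitz_sublevel_sigma_boxes _ (basis_norm_sum_ge0 hN)) => y z e yz.
rewrite (le_trans (vnorm_sub_le hN y z c)) // addrC lerD2l mulrC.
by apply: vnorm_le_coord_bound => // i; rewrite tnth_vsub.
Qed.

Lemma nball_measurable c s : measurable (nball N c s).
Proof. exact: sigma_boxes_measurable (nball_sigma_boxes c s). Qed.

Lemma preimage_rescale_unit_nball c s : 0 < s ->
  rescale c s @^-1` nball N (vzero R d) 1 = nball N c s.
Proof.
move=> s_gt0; apply/seteqP; split => y; rewrite /nball /rescale /=;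
  have -> : vsub (vscale s^-1 (vsub y c)) (vzero R d) = vscale s^-1 (vsub y c)
    by apply: eq_from_tnth => i; rewrite !vectE subr0.
all: by rewrite vnormZ // gtr0_norm ?invr_gt0 // ler_pdivrMl // mulr1.
Qed.

Lemma lebesgue_nball (lam : {measure set (d.-tuple R) -> \bar R}) c s :
  is_lebesgue_d lam -> 0 < s ->
  lam (nball N c s) = ((s ^+ d)%:E * lam (nball N (vzero R d) 1))%E.
Proof.
move=> hlam s_gt0; rewrite -(preimage_rescale_unit_nball c s_gt0).
by apply: lebesgue_rescale => //; exact: nball_sigma_boxes.
Qed.

End NormBalls.

Lemma lebesgue_set1 (R : realType) (d : nat) (a : d.-tuple R)
    (lam : {measure set (d.-tuple R) -> \bar R}) :
  is_lebesgue_d lam -> (0 < d)%N -> lam [set a] = 0%E.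
Proof.
move=> hlam d_gt0; rewrite set1_box /box hlam => [|i]; last by rewrite lexx.
under eq_bigr do rewrite subrr.
by rewrite prodr_const card_ord expr0n gtn_eqF.
Qed.

Lemma pA_mul_le (R : realType) (d : nat) (lam : {measure set (d.-tuple R) -> \bar R})
    (N : d.-tuple R -> R) (A : set (d.-tuple R)) (a x : d.-tuple R) (t : R) :
  is_norm N -> measurable A -> (0 < pA lam N A a)%E -> A x -> 0 < t <= N (vsub x a) ->
  (pA lam N A a * lam (nball N x t) <= lam (nball N x t `&` A))%E.
Proof.
move=> hN mA pA_gt0 Ax xt; apply: mule_le_of_le_fine_div => //.
- have mB := nball_measurable hN x t.
  by apply: le_measure; rewrite ?inE //; exact: measurableI.
- by apply: ereal_inf_lbound; exists x, t.
Qed.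

Section InnerBall.
Variables (R : realType) (d : nat) (N N0 : d.-tuple R -> R) (C0 : R).
Hypotheses (hN : is_norm N) (hN0 : is_norm N0) (C0_ge1 : 1 <= C0).
Hypothesis hequiv : forall v, C0^-1 * N0 v <= N v <= C0 * N0 v.
Variables (a x : d.-tuple R) (t : R).
Hypotheses (t_gt0 : 0 < t) (t_le : t <= N (vsub x a)).

Definition inner_center : d.-tuple R :=
  vadd a (vscale (1 - t / (2 * N (vsub x a))) (vsub x a)).

Definition inner_radius : R := t / (2 * C0 ^+ 2).

Let u := t / (2 * N (vsub x a)).

Let r_gt0 : 0 < N (vsub x a). Proof. exact: lt_le_trans t_le. Qed.
Let u_gt0 : 0 < u. Proof. by rewrite divr_gt0 // mulr_gt0. Qed.
Let u_le1 : u <= 1.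
Proof. by rewrite ler_pdivrMr ?mulr_gt0 //; have := t_le; have := t_gt0; lra. Qed.
Let u_r : u * N (vsub x a) = t / 2. Proof. by rewrite /u; field; rewrite gt_eqF. Qed.
Let C0_gt0 : 0 < C0. Proof. exact: lt_le_trans C0_ge1. Qed.

Let inner_center_subl : vsub inner_center a = vscale (1 - u) (vsub x a).
Proof. by apply: eq_from_tnth => i; rewrite !vectE /u; ring. Qed.

Let inner_center_subr : vsub inner_center x = vscale (- u) (vsub x a).
Proof. by apply: eq_from_tnth => i; rewrite !vectE /u; ring. Qed.

Lemma inner_radius_gt0 : 0 < inner_radius.
Proof. by rewrite divr_gt0 // mulr_gt0 // exprn_gt0. Qed.

Lemma inner_radius_le_half : inner_radius <= t / 2.
Proof.
have C2_ge1 : 1 <= C0 ^+ 2 by rewrite expr_ge1 // ltW.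
rewrite /inner_radius invfM mulrA ler_pdivrMr ?exprn_gt0 // ler_peMr //.
by rewrite divr_ge0 // ltW.
Qed.

Lemma star_inner_center (A : set (d.-tuple R)) : star_shaped A a -> A x -> A inner_center.
Proof.
move=> hA Ax; apply: hA => //; have := u_gt0; have := u_le1.
by rewrite -/u => ? ?; apply/andP; split; lra.
Qed.

Lemma inner_radius_le : inner_radius <= N (vsub inner_center a).
Proof.
rewrite inner_center_subl vnormZ // ger0_norm; last by have := u_le1; lra.
by rewrite mulrBl mul1r u_r; have := inner_radius_le_half; have := t_le; lra.
Qed.

Lemma inner_nball_sub : nball N inner_center inner_radius `<=` nball N x t.
Proof.
move=> y; rewrite /nball /= => yB; rewrite (le_trans (vnorm_sub_le hN y inner_center x)) //.
rewrite inner_center_subr vnormZ // normrN (ger0_norm (ltW u_gt0)) u_r.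
by have := inner_radius_le_half; lra.
Qed.

(* With [x' - a = (1 - u) (x - a)]:
   [N0 (y - x') <= C0 * inner_radius = t / (2 C0) <= u * N0 (x - a)]. *)
Lemma inner_nball_N0_le y : nball N inner_center inner_radius y ->
  N0 (vsub y a) <= N0 (vsub x a).
Proof.
rewrite /nball /= => yB.
have N0_le v : N0 v <= C0 * N v.
  by have /andP[+ _] := hequiv v; rewrite -ler_pdivrMl ?invr_gt0 // invrK.
have r_le : N (vsub x a) <= C0 * N0 (vsub x a) by have /andP[] := hequiv (vsub x a).
rewrite (le_trans (vnorm_sub_le hN0 y inner_center a)) // inner_center_subl vnormZ //.
rewrite ger0_norm; last by have := u_le1; lra.
have : C0 * inner_radius <= u * N0 (vsub x a).
  have -> : C0 * inner_radius = u * (N (vsub x a) / C0).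
    by rewrite mulrA u_r /inner_radius; field; rewrite gt_eqF.
  by rewrite ler_wpM2l ?(ltW u_gt0) // ler_pdivrMr // [_ * C0]mulrC.
have := N0_le (vsub y inner_center); have := ler_wpM2l (ltW C0_gt0) yB; lra.
Qed.

End InnerBall.

Unset Implicit Arguments.

Theorem lemma2p10 (R : realType) (d : nat) (hd : (1 <= d)%N)
    (lam : {measure set (d.-tuple R) -> \bar R}) (hlam : is_lebesgue_d lam)
    (N : d.-tuple R -> R) (hN : is_norm N)
    (A : set (d.-tuple R)) (mA : measurable A) (a1 : d.-tuple R) (Aa1 : A a1)
    (hstar : star_shaped A a1)
    (hp : (0 < pA lam N A a1)%E)
    (f : d.-tuple R -> R) (f_ge0 : forall x, 0 <= f x)
    (mf : measurable_fun setT f)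
    (fprob : (\int[lam]_x (f x)%:E = 1)%E)
    (N0 : d.-tuple R -> R) (M : R)
    (hf : almost_radial_nonincr_with f A a1 N0 M)
    (C0 : R) (hC0 : 1 <= C0)
    (hequiv : forall x, C0^-1 * N0 x <= N x <= C0 * N0 x) :
  forall x, A x -> forall t : R, 0 < t <= N (vsub x a1) ->
    ((M * (2 * C0 ^+ 2) ^- d * f x * t ^+ d)%:E * pA lam N A a1
       * lam (nball N (@vzero R d) 1)
     <= \int[lam]_(y in nball N x t) (f y)%:E)%E.
Proof.
move=> x Ax t /andP[t_gt0 t_le]; case: hf => hN0 /andP[M_gt0 _] f_radial.
have x_neq_a1 : x <> a1 by move=> xa; move: t_le; rewrite xa vnorm_subxx //; lra.
pose B' := nball N (inner_center N a1 x t) (inner_radius C0 t).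
pose E := (B' `&` A) `\` [set a1].
have mBA : measurable (B' `&` A) by apply: measurableI => //; exact: nball_measurable.
have mE : measurable E := measurableD mBA (set1_measurable a1).
have f_ge_E y : E y -> M * f x <= f y.
  move=> [[B'y Ay] y_neq_a1]; apply: f_radial => //.
  exact: (inner_nball_N0_le hN0 hC0 hequiv t_gt0 t_le B'y).
have pA_le_E : (pA lam N A a1 * lam B' <= lam E)%E.
  rewrite (measureD_null mBA (set1_measurable a1) (lebesgue_set1 a1 hlam hd)).
  apply: pA_mul_le => //; first exact: star_inner_center.
  by rewrite inner_radius_gt0 // inner_radius_le.
have -> : ((M * (2 * C0 ^+ 2) ^- d * f x * t ^+ d)%:E * pA lam N A a1
    * lam (nball N (vzero R d) 1) = (M * f x)%:E * (pA lam N A a1 * lam B'))%E.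
  rewrite /B' (lebesgue_nball hN _ hlam (inner_radius_gt0 hC0 t_gt0)).
  have -> : M * (2 * C0 ^+ 2) ^- d * f x * t ^+ d = M * f x * inner_radius C0 t ^+ d.
    by rewrite /inner_radius expr_div_n; ring.
  by rewrite EFinM -!muleA; congr (_ * _)%E; exact: muleCA.
apply: le_trans (cst_mul_measure_le_integral lam (nball_measurable hN x t) mE _ _
  (fun y _ => f_ge0 y) _ f_ge_E).
- by apply: lee_wpmul2l; rewrite // lee_fin mulr_ge0 // ltW.
- by move=> y [[B'y _] _]; exact: (inner_nball_sub hN hC0 t_gt0 t_le B'y).
- exact: measurable_funTS mf.
- by rewrite mulr_ge0 // ltW.
Qed.
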